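(* Let $r\ge2$ and fix $\tilde{\mathbf z}=(z_2,\dots,z_r)^\intercal\in\Omega^{r-1}$. For any $2\le j\le r$, any non-negative integer $k$ and any $t\in\mathbb C_\infty$ with $|t|_\infty\le1$, \[\lim_{|z_1|_\infty=|\mathbf z|_i\to\infty}\sum'_{a_1,\dots,a_r\in A}\frac{a_j(t)}{(a_1z_1+\dots+a_rz_r)^{q^k}}=\sum'_{a_2,\dots,a_r\in A}\frac{a_j(t)}{(a_2z_2+\dots+a_rz_r)^{q^k}}.\]
   Context: Let $q$ be a prime power, $A=\mathbb F_q[\theta]$, $|\theta|_\infty=q$, $K_\infty=\mathbb F_q((1/\theta))$, $\mathbb C_\infty$ the completion of an algebraic closure of $K_\infty$; $a(t)$ is $a\in A$ with $\theta$ replaced by $t$. For $n\ge1$, $\Omega^n$ is the set of $(z_1,\dots,z_n)^\intercal\in\mathbb C_\infty^n$ with $K_\infty$-linearly independent entries and $z_n=1$. Here $\mathbf z=(z_1,\tilde{\mathbf z})=(z_1,z_2,\dots,z_r)^\intercal\in\Omega^r$, $|\mathbf z|_i=\inf\{|z_1-\alpha|_\infty:\alpha\in K_\infty z_2+\dots+K_\infty z_r\}$, and the limit is taken as $z_1$ varies (with $\tilde{\mathbf z}$ fixed, $\mathbf z\in\Omega^r$) subject to $|z_1|_\infty=|\mathbf z|_i$ and $|z_1|_\infty\to\infty$. $\sum'$ excludes the tuple with all entries zero. *)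

From HB Require Import structures.
From mathcomp Require Import all_boot all_order all_algebra.
From mathcomp Require Import classical_sets reals.
Set Implicit Arguments. Unset Strict Implicit. Unset Printing Implicit Defensive.
Import Order.TTheory GRing.Theory Num.Theory.
Local Open Scope ring_scope.
Local Open Scope classical_set_scope.

(* C plays the role of C_infty: an algebraically closed field C with an
   absolute value nrm : C -> R, a copy of F_q (F with #|F| = q) via iota,
   and theta in C.  See is_Cinfty below. *)
Section Cinf.
Variables (R : realType) (F : finFieldType) (C : closedFieldType)
  (iota : {rmorphism F -> C}) (nrm : C -> R) (theta : C).

(* a(x) for a in F[theta] = {poly F}, evaluated at x in C *)
Definition evalA (a : {poly F}) (x : C) : C := (map_poly iota a).[x].

Definition cvg_nrm (u : nat -> C) (v : C) : Prop :=
  forall e : R, 0 < e -> exists N : nat, forall d, (N <= d)%N -> nrm (u d - v) < e.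

Definition cauchy_nrm (u : nat -> C) : Prop :=
  forall e : R, 0 < e -> exists N : nat, forall m d, (N <= m)%N -> (N <= d)%N ->
    nrm (u m - u d) < e.

Definition in_Kinf (x : C) : Prop :=
  forall e : R, 0 < e -> exists a b : {poly F},
    b != 0 /\ nrm (x - evalA a theta / evalA b theta) < e.

Definition alg_over_Kinf (y : C) : Prop :=
  exists p : {poly C}, p != 0 /\ (forall i, in_Kinf p`_i) /\ root p y.

(* (C, nrm, iota, theta) is (isometrically) C_infty: complete non-archimedean
   absolutely valued algebraically closed field, |theta| = q, in which the
   algebraic closure of K_infty (closure of F_q(theta)) is dense. *)
Definition is_Cinfty : Prop :=
  (forall x, nrm x = 0 <-> x = 0) /\
  (forall x y, nrm (x * y) = nrm x * nrm y) /\
  (forall x y, nrm (x + y) <= Num.max (nrm x) (nrm y)) /\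
  (forall u, cauchy_nrm u -> exists v, cvg_nrm u v) /\
  nrm theta = (#|F|)%:R /\
  (forall x (e : R), 0 < e -> exists y, alg_over_Kinf y /\ nrm (x - y) < e).

Definition in_Omega (m : nat) (z : 'I_m.+1 -> C) : Prop :=
  (forall c : 'I_m.+1 -> C, (forall i, in_Kinf (c i)) ->
     \sum_i c i * z i = 0 -> forall i, c i = 0) /\ z ord_max = 1.

Definition zcons (m : nat) (z1 : C) (zt : 'I_m -> C) : 'I_m.+1 -> C :=
  fun i => if unlift ord0 i is Some i' then zt i' else z1.

Definition inorm (m : nat) (z1 : C) (zt : 'I_m -> C) : R :=
  inf [set nrm (z1 - \sum_i c i * zt i) |
        c in [set c : 'I_m -> C | forall i, in_Kinf (c i)]].

Definition polyOf (d : nat) (f : {ffun 'I_d -> F}) : {poly F} :=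
  \poly_(l < d) (if insub l is Some l' then f l' else 0).

(* partial sum over tuples (a_1..a_m) in A^m, all deg a_i < d, not all zero,
   of a_j(t) / (a_1 z_1 + ... + a_m z_m)^(q^k) *)
Definition psum (m : nat) (z : 'I_m -> C) (j : 'I_m) (k : nat) (t : C)
  (d : nat) : C :=
  \sum_(c : {ffun 'I_m -> {ffun 'I_d -> F}} | c != 0)
     evalA (polyOf (c j)) t /
     (\sum_i evalA (polyOf (c i)) theta * z i) ^+ (#|F| ^ k).

End Cinf.

From HB Require Import structures.
From mathcomp Require Import all_boot all_order all_algebra finfield.
From mathcomp Require Import classical_sets reals boolp.
From mathcomp Require Import ring lra.
Import Order.TTheory GRing.Theory Num.Theory.
Local Open Scope ring_scope.
Set Implicit Arguments. Unset Strict Implicit. Unset Printing Implicit Defensive.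

(* Let C be complete for an ultrametric absolute value and K a closed subfield.
   If z_1..z_m are K-linearly independent, there is kappa > 0 such that
   kappa |c_i| <= |sum_i c_i z_i| for all c in K^m (induction on m; completeness
   shows that z_i has positive distance from the K-span of the other z's).
   With K = K_infty, a term of the series whose tuple contains a polynomial of
   degree >= d has denominator of size >= kappa q^d, so it is at most
   (kappa q^d)^-1 and the partial sums over degrees < d are Cauchy.  If
   |z_1| = |z|_i >= 1, a term with a_1 <> 0 has
   |a_1 z_1 + ... + a_r z_r| = |a_1(theta)| |z_1 - sum b_i z_i| >= |z_1|, so it is
   at most |z_1|^-1, while the terms with a_1 = 0 form the series in z_2..z_r.
   The two limits therefore differ by at most |z_1|^-1. *)

Definition ultrametric_abs (R : realType) (C : fieldType) (nrm : C -> R) : Prop :=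
  (forall x, nrm x = 0 <-> x = 0) /\
  (forall x y, nrm (x * y) = nrm x * nrm y) /\
  (forall x y, nrm (x + y) <= Num.max (nrm x) (nrm y)).

Lemma is_Cinfty_ultrametric (R : realType) (F : finFieldType) (C : closedFieldType)
    (iota : {rmorphism F -> C}) (nrm : C -> R) (theta : C) :
  is_Cinfty iota nrm theta -> ultrametric_abs nrm.
Proof. by case=> eq0 [nrmM [nrm_ultra _]]. Qed.

Section CoefficientTuples.
Variable F : finFieldType.

Definition coefs d (p : {poly F}) : {ffun 'I_d -> F} := [ffun l : 'I_d => p`_l].

Lemma polyOfK d : cancel (@polyOf F d) (coefs d).
Proof. by move=> f; apply/ffunP => l; rewrite ffunE coef_poly ltn_ord valK. Qed.

Lemma coefsK d (p : {poly F}) : (size p <= d)%N -> polyOf (coefs d p) = p.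
Proof.
move=> pd; apply/polyP => l; rewrite coef_poly; case: insubP => [l' _ <-|ld].
  by rewrite ltn_ord ffunE.
by rewrite if_same nth_default // (leq_trans pd) // leqNgt.
Qed.

Lemma size_polyOf d (f : {ffun 'I_d -> F}) : (size (polyOf f) <= d)%N.
Proof. exact: size_poly. Qed.

Lemma coefs0 d : coefs d 0 = 0.
Proof. by apply/ffunP => l; rewrite !ffunE coef0. Qed.

Lemma polyOf0 d : polyOf (0 : {ffun 'I_d -> F}) = 0.
Proof. by rewrite -(coefs0 d) coefsK ?size_poly0. Qed.

Lemma polyOf_eq0 d (f : {ffun 'I_d -> F}) : (polyOf f == 0) = (f == 0).
Proof. by rewrite -(polyOf0 d) (can_eq (@polyOfK d)). Qed.

End CoefficientTuples.

Lemma pow_unbounded (R : archiRealFieldType) (b : nat) (k B : R) :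
  (1 < b)%N -> 0 < k -> exists N, forall n, (N <= n)%N -> B < k * b%:R ^+ n.
Proof.
move=> b1 k0; have [B0|B0] := leP B 0.
  exists 0%N => n _; apply: le_lt_trans B0 _.
  by rewrite mulr_gt0 // exprn_gt0 // ltr0n ltnW.
exists (Num.bound (k^-1 * B)) => n nN; rewrite -ltr_pdivrMl //.
have kB0 : 0 <= k^-1 * B by rewrite ltW // mulr_gt0 ?invr_gt0.
apply: lt_le_trans (archi_boundP kB0) _.
by rewrite -natrX ler_nat (leq_trans nN) // ltnW // ltn_expl.
Qed.

Section UltrametricField.
Variables (R : realType) (C : closedFieldType) (nrm : C -> R).
Hypothesis nrm_abs : ultrametric_abs nrm.

Lemma nrm_eq0 x : nrm x = 0 <-> x = 0. Proof. by case: nrm_abs. Qed.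
Lemma nrmM x y : nrm (x * y) = nrm x * nrm y. Proof. by case: nrm_abs => _ []. Qed.
Lemma nrmD_max x y : nrm (x + y) <= Num.max (nrm x) (nrm y).
Proof. by case: nrm_abs => _ []. Qed.

Lemma nrm0 : nrm 0 = 0. Proof. exact/nrm_eq0. Qed.

Lemma nrm_gt0 x : x != 0 -> 0 < nrm x.
Proof.
(* in an algebraically closed field every element is a square *)
move=> x0; have [y] := @solve_monicpoly C 2 (fun i => if i == 0%N then x else 0) isT.
rewrite big_ord_recl big_ord1 /= mul0r addr0 mulr1 => yx.
rewrite lt_def -{2}yx expr2 nrmM -expr2 sqr_ge0 andbT.
by apply/eqP => /nrm_eq0 /eqP; apply/negP.
Qed.

Lemma nrm_ge0 x : 0 <= nrm x.
Proof. by have [->|/nrm_gt0/ltW //] := eqVneq x 0; rewrite nrm0. Qed.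

Lemma nrm1 : nrm 1 = 1.
Proof.
apply: (mulfI (lt0r_neq0 (nrm_gt0 (oner_neq0 C)))).
by rewrite -nrmM !mulr1.
Qed.

Lemma nrmX x n : nrm (x ^+ n) = nrm x ^+ n.
Proof. by elim: n => [|n IH]; rewrite ?expr0 ?nrm1 // !exprS nrmM IH. Qed.

Lemma nrm_unity_root x n : (0 < n)%N -> x ^+ n = 1 -> nrm x = 1.
Proof.
move=> n0 xn1; apply/eqP.
by rewrite -(pexpr_eq1 n0 (nrm_ge0 x)) -nrmX xn1 nrm1.
Qed.

Lemma nrmN x : nrm (- x) = nrm x.
Proof. by rewrite -mulN1r nrmM (@nrm_unity_root _ 2) ?mul1r // sqrrN expr1n. Qed.

Lemma nrmB x y : nrm (x - y) = nrm (y - x).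
Proof. by rewrite -nrmN opprB. Qed.

Lemma nrmV x : nrm x^-1 = (nrm x)^-1.
Proof.
have [->|x0] := eqVneq x 0; first by rewrite invr0 nrm0 invr0.
apply: (mulfI (lt0r_neq0 (nrm_gt0 x0))).
by rewrite -nrmM !mulfV ?nrm1 ?lt0r_neq0 ?nrm_gt0.
Qed.

Lemma nrmD_le x y e : nrm x <= e -> nrm y <= e -> nrm (x + y) <= e.
Proof. by move=> hx hy; apply: le_trans (nrmD_max x y) _; rewrite ge_max hx. Qed.

Lemma nrmD_lt x y e : nrm x < e -> nrm y < e -> nrm (x + y) < e.
Proof. by move=> hx hy; apply: le_lt_trans (nrmD_max x y) _; rewrite gt_max hx. Qed.

Lemma nrmB_lt x y z e : nrm (x - y) < e -> nrm (y - z) < e -> nrm (x - z) < e.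
Proof. by move=> hxy hyz; rewrite -(subrKA y); apply: nrmD_lt. Qed.

Lemma nrm_sum_le (I : Type) (r : seq I) (P : pred I) (f : I -> C) e :
  0 <= e -> (forall i, P i -> nrm (f i) <= e) -> nrm (\sum_(i <- r | P i) f i) <= e.
Proof.
move=> e0 fe; elim/big_rec: _ => [|i x Pi hx]; first by rewrite nrm0.
exact: nrmD_le (fe i Pi) hx.
Qed.

Lemma nrmD_eq x y : nrm y < nrm x -> nrm (x + y) = nrm x.
Proof.
move=> yx; apply/eqP; rewrite eq_le; apply/andP; split.
  by apply: le_trans (nrmD_max x y) _; rewrite ge_max lexx ltW.
have := nrmD_max (x + y) (- y); rewrite addrK nrmN le_max => /orP[//|xy].
by have := lt_le_trans yx xy; rewrite ltxx.
Qed.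

Lemma cvg_nrm_dist_le (u u' : nat -> C) v v' B :
  cvg_nrm nrm u v -> cvg_nrm nrm u' v' -> (forall d, nrm (u d - u' d) <= B) ->
  nrm (v - v') <= B.
Proof.
move=> uv uv' uB; rewrite leNgt; apply/negP => Bv.
have e0 : 0 < nrm (v - v') := le_lt_trans (le_trans (nrm_ge0 _) (uB 0%N)) Bv.
have [N hN] := uv _ e0; have [N' hN'] := uv' _ e0.
set e := nrm (v - v') in Bv hN hN' *.
suff : nrm (v - v') < e by rewrite ltxx.
have -> : v - v' = (v - u (maxn N N')) + ((u (maxn N N') - u' (maxn N N')) +
  (u' (maxn N N') - v')) by ring.
apply: nrmD_lt; first by rewrite nrmB; apply: hN; rewrite leq_maxl.
apply: nrmD_lt; first exact: le_lt_trans (uB _) Bv.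
by apply: hN'; rewrite leq_maxr.
Qed.

Lemma cvg_nrm_unique (u : nat -> C) v v' :
  cvg_nrm nrm u v -> cvg_nrm nrm u v' -> v = v'.
Proof.
move=> uv uv'; apply/eqP; rewrite -subr_eq0; apply/eqP/nrm_eq0/eqP.
rewrite eq_le nrm_ge0 andbT; apply: cvg_nrm_dist_le uv uv' _ => d.
by rewrite subrr nrm0.
Qed.

Lemma cvg_nrm_cst v : cvg_nrm nrm (fun=> v) v.
Proof. by move=> e e0; exists 0%N => d _; rewrite subrr nrm0. Qed.

Lemma cvg_nrmD (u u' : nat -> C) v v' :
  cvg_nrm nrm u v -> cvg_nrm nrm u' v' -> cvg_nrm nrm (fun n => u n + u' n) (v + v').
Proof.
move=> uv uv' e e0; have [N hN] := uv e e0; have [N' hN'] := uv' e e0.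
exists (maxn N N') => d; rewrite geq_max => /andP[dN dN'].
by rewrite opprD addrACA; apply: nrmD_lt; [apply: hN | apply: hN'].
Qed.

Lemma cvg_nrmMr (u : nat -> C) v w :
  cvg_nrm nrm u v -> cvg_nrm nrm (fun n => u n * w) (v * w).
Proof.
move=> uv e e0; have [->|w0] := eqVneq w 0.
  by exists 0%N => d _; rewrite !mulr0 subrr nrm0.
have [N hN] := uv _ (divr_gt0 e0 (nrm_gt0 w0)).
by exists N => d dN; rewrite -mulrBl nrmM -ltr_pdivlMr ?nrm_gt0 //; apply: hN.
Qed.

Lemma cvg_nrm_sum (I : Type) (r : seq I) (u : nat -> I -> C) (v : I -> C) :
  (forall i, cvg_nrm nrm (fun n => u n i) (v i)) ->
  cvg_nrm nrm (fun n => \sum_(i <- r) u n i) (\sum_(i <- r) v i).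
Proof.
move=> uv; elim: r => [|i r IH].
  by move=> e e0; exists 0%N => d _; rewrite !big_nil subrr nrm0.
rewrite big_cons; have -> : (fun n => \sum_(j <- i :: r) u n j) =
  (fun n => u n i + \sum_(j <- r) u n j) by apply: funext => n; rewrite big_cons.
exact: cvg_nrmD.
Qed.

Lemma cvg_nrm_cauchy (u : nat -> C) v : cvg_nrm nrm u v -> cauchy_nrm nrm u.
Proof.
move=> uv e e0; have [N hN] := uv e e0; exists N => m d mN dN.
by apply: nrmB_lt (hN m mN) _; rewrite nrmB; apply: hN.
Qed.

Lemma cauchy_nrm_dominated (u w : nat -> C) k : 0 < k ->
  (forall m d, k * nrm (w m - w d) <= nrm (u m - u d)) ->
  cauchy_nrm nrm u -> cauchy_nrm nrm w.
Proof.
move=> k0 wu cu e e0; have [N hN] := cu _ (mulr_gt0 k0 e0).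
exists N => m d mN dN; rewrite -(ltr_pM2l k0).
exact: le_lt_trans (wu m d) (hN m d mN dN).
Qed.

Lemma cvg_nrm_to0 (u : nat -> C) :
  (forall n, nrm (u n) < (n.+1%:R)^-1) -> cvg_nrm nrm u 0.
Proof.
move=> uN e e0; exists (Num.bound e^-1) => n nN; rewrite subr0.
apply: lt_trans (uN n) _; rewrite invf_plt ?posrE ?ltr0Sn //.
have e'0 : 0 <= e^-1 by rewrite invr_ge0 ltW.
by apply: lt_le_trans (archi_boundP e'0) _; rewrite ler_nat (leq_trans nN).
Qed.

Definition nrm_closure (P : C -> Prop) (x : C) : Prop :=
  forall e, 0 < e -> exists2 y, P y & nrm (x - y) < e.

Lemma nrm_closureW (P : C -> Prop) x : P x -> nrm_closure P x.
Proof. by move=> Px e e0; exists x; rewrite // subrr nrm0. Qed.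

Lemma nrm_closure_cvg (P : C -> Prop) (u : nat -> C) x :
  (forall n, P (u n)) -> cvg_nrm nrm u x -> nrm_closure P x.
Proof.
by move=> Pu ux e e0; have [N hN] := ux e e0; exists (u N); rewrite // nrmB hN.
Qed.

Lemma nrm_closure_id (P : C -> Prop) x :
  nrm_closure (nrm_closure P) x -> nrm_closure P x.
Proof.
move=> Px e e0; have [y Py xy] := Px e e0; have [z Pz yz] := Py e e0.
by exists z => //; apply: nrmB_lt xy yz.
Qed.

Section ClosureSubfield.
Variable P : C -> Prop.

Lemma nrm_closure_sub : (forall x y, P x -> P y -> P (x - y)) ->
  forall x y, nrm_closure P x -> nrm_closure P y -> nrm_closure P (x - y).
Proof.
move=> PB x y Px Py e e0; have [x' Px' xx'] := Px e e0; have [y' Py' yy'] := Py e e0.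
exists (x' - y'); first exact: PB.
have -> : x - y - (x' - y') = (x - x') - (y - y') by ring.
by apply: nrmD_lt; rewrite ?nrmN.
Qed.

Lemma nrm_closure_mul : (forall x y, P x -> P y -> P (x * y)) ->
  forall x y, nrm_closure P x -> nrm_closure P y -> nrm_closure P (x * y).
Proof.
move=> PM x y Px Py e e0; set D := nrm x + nrm y + 1.
have [x0 y0] := (nrm_ge0 x, nrm_ge0 y).
have D0 : 0 < D by rewrite /D; lra.
set d := Num.min 1 (e / (D + 1)).
have d0 : 0 < d by rewrite lt_min ltr01 divr_gt0 //; lra.
have d1 : d <= 1 by rewrite ge_min lexx.
have dD : d * D < e.
  apply: (le_lt_trans (y := e / (D + 1) * D)).
    by apply: ler_wpM2r; [exact: ltW | rewrite ge_min lexx orbT].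
  have D1 : 0 < D + 1 by rewrite addr_gt0.
  by rewrite mulrAC ltr_pdivrMr // ltr_pM2l // ltrDl.
have [x' Px' xx'] := Px d d0; have [y' Py' yy'] := Py d d0.
exists (x' * y'); first exact: PM.
have y'D : nrm y' <= D.
  rewrite -(subrK y y'); apply: nrmD_le; last by rewrite /D; lra.
  by rewrite nrmB; apply: le_trans (ltW yy') _; rewrite /D; lra.
have -> : x * y - x' * y' = x * (y - y') + (x - x') * y' by ring.
apply: nrmD_lt; rewrite nrmM; apply: le_lt_trans dD.
  by rewrite mulrC ler_pM ?nrm_ge0 //; [exact: ltW | rewrite /D; lra].
by rewrite ler_pM ?nrm_ge0 //; exact: ltW.
Qed.

Lemma nrm_closure_inv : (forall x, P x -> P x^-1) ->
  forall x, nrm_closure P x -> nrm_closure P x^-1.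
Proof.
move=> PV x; have [->|x0] := eqVneq x 0; first by rewrite invr0.
move=> Px e e0; have nx := nrm_gt0 x0.
have d0 : 0 < Num.min (nrm x) (e * nrm x ^+ 2).
  by rewrite lt_min nx mulr_gt0 ?exprn_gt0.
have [y Py] := Px _ d0; rewrite lt_min => /andP[xy xye].
have ny : nrm y = nrm x by rewrite -(subrK x y) addrC nrmD_eq // nrmB.
have y0 : y != 0 by apply/eqP => y0; move: ny; rewrite y0 nrm0; lra.
exists y^-1; first exact: PV.
have -> : x^-1 - y^-1 = (y - x) / (x * y) by field; rewrite x0 y0.
by rewrite nrmM nrmV nrmM ny -expr2 ltr_pdivrMr ?exprn_gt0 // nrmB.
Qed.

End ClosureSubfield.

Section NormEquivalence.
Variable K : C -> Prop.
Hypotheses (K1 : K 1) (K_sub : forall x y, K x -> K y -> K (x - y))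
  (K_mul : forall x y, K x -> K y -> K (x * y)) (K_inv : forall x, K x -> K x^-1)
  (K_closed : forall x, nrm_closure K x -> K x).
Hypothesis nrm_complete : forall u, cauchy_nrm nrm u -> exists v, cvg_nrm nrm u v.

Let K0 : K 0. Proof. by rewrite -(subrr 1); apply: K_sub. Qed.

Definition K_indep m (z : 'I_m -> C) : Prop :=
  forall c, (forall i, K (c i)) -> \sum_i c i * z i = 0 -> forall i, c i = 0.

Definition coef_bound m (z : 'I_m -> C) (k : R) : Prop :=
  forall a, (forall i, K (a i)) -> forall i, k * nrm (a i) <= nrm (\sum_i a i * z i).

Lemma K_indep_lift m (z : 'I_m.+1 -> C) i0 :
  K_indep z -> K_indep (fun i => z (lift i0 i)).
Proof.
move=> zi c Kc c0 i; pose c' j := if unlift i0 j is Some j' then c j' else 0.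
have Kc' j : K (c' j) by rewrite /c'; case: unliftP.
have := zi c' Kc'; rewrite (bigD1_ord i0) //= /c' unlift_none mul0r add0r.
under eq_bigr do rewrite liftK.
by move=> /(_ c0 (lift i0 i)); rewrite liftK.
Qed.

Lemma K_indep_dist_gt0 m (z : 'I_m.+1 -> C) i0 k :
  K_indep z -> 0 < k -> coef_bound (fun i => z (lift i0 i)) k ->
  exists2 d, 0 < d & forall b, (forall i, K (b i)) ->
    d <= nrm (z i0 + \sum_i b i * z (lift i0 i)).
Proof.
move=> zi k0 zk; apply: contrapT => no_d.
have /choice [b hb] : forall n : nat, exists b : 'I_m -> C, (forall i, K (b i)) /\
    nrm (z i0 + \sum_i b i * z (lift i0 i)) < (n.+1%:R)^-1.
  move=> n; apply: contrapT => no_b; apply: no_d.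
  exists (n.+1%:R)^-1 => [|b Kb]; first by rewrite invr_gt0 ltr0Sn.
  by rewrite leNgt; apply/negP => bn; apply: no_b; exists b.
have Kb n i : K (b n i) by case: (hb n).
pose u n := z i0 + \sum_i b n i * z (lift i0 i).
have u0 : cvg_nrm nrm u 0 by apply: cvg_nrm_to0 => n; case: (hb n).
have /choice [beta hbeta] : forall i, exists v, cvg_nrm nrm (fun n => b n i) v.
  move=> i; apply/nrm_complete/(cauchy_nrm_dominated k0 _ (cvg_nrm_cauchy u0)) => p d.
  have := zk (fun j => b p j - b d j) (fun j => K_sub (Kb p j) (Kb d j)) i.
  suff -> : \sum_j (b p j - b d j) * z (lift i0 j) = u p - u d by [].
  rewrite /u opprD addrACA subrr add0r -sumrB.
  by apply: eq_bigr => j _; rewrite mulrBl.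
have Kbeta i : K (beta i) by apply/K_closed/(nrm_closure_cvg (Kb^~ i)).
have : cvg_nrm nrm u (z i0 + \sum_i beta i * z (lift i0 i)).
  exact: cvg_nrmD (cvg_nrm_cst _) (cvg_nrm_sum _ (fun i => cvg_nrmMr _ (hbeta i))).
move=> /(cvg_nrm_unique u0) X0.
pose c j := if unlift i0 j is Some j' then beta j' else 1.
have Kc j : K (c j) by rewrite /c; case: unliftP.
have := zi c Kc; rewrite (bigD1_ord i0) //= /c unlift_none mul1r.
under eq_bigr do rewrite liftK.
by move=> /(_ (esym X0) i0); rewrite unlift_none => /eqP; rewrite oner_eq0.
Qed.

Lemma K_indep_coef_bound_at m (z : 'I_m.+1 -> C) i0 k :
  K_indep z -> 0 < k -> coef_bound (fun i => z (lift i0 i)) k ->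
  exists2 d, 0 < d & forall a, (forall i, K (a i)) ->
    d * nrm (a i0) <= nrm (\sum_i a i * z i).
Proof.
move=> zi k0 zk; have [d d0 hd] := K_indep_dist_gt0 zi k0 zk.
exists d => // a Ka; have [->|a0] := eqVneq (a i0) 0.
  by rewrite nrm0 mulr0 nrm_ge0.
pose b i := a (lift i0 i) / a i0.
have -> : \sum_i a i * z i = a i0 * (z i0 + \sum_i b i * z (lift i0 i)).
  rewrite (bigD1_ord i0) //= mulrDr mulr_sumr; congr (_ + _).
  by apply: eq_bigr => j _; rewrite /b mulrA [a i0 * _]mulrC divfK.
rewrite nrmM mulrC ler_wpM2l ?nrm_ge0 // hd // => i.
exact: K_mul (Ka _) (K_inv (Ka _)).
Qed.

Lemma K_indep_coef_bound m (z : 'I_m -> C) :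
  K_indep z -> exists2 k, 0 < k & coef_bound z k.
Proof.
elim: m z => [|m IH] z zi; first by exists 1 => // a _ [].
have /choice [d hd] : forall i0, exists d, 0 < d /\ forall a, (forall i, K (a i)) ->
    d * nrm (a i0) <= nrm (\sum_i a i * z i).
  move=> i0; have [k k0 zk] := IH _ (K_indep_lift (i0 := i0) zi).
  by have [d d0 hd] := K_indep_coef_bound_at zi k0 zk; exists d.
exists (\big[Num.min/1]_i d i) => [|a Ka i].
  by apply: lt_bigmin => [|i _]; [exact: ltr01 | case: (hd i)].
apply: le_trans (proj2 (hd i) a Ka).
by rewrite ler_wpM2r ?nrm_ge0 // bigmin_le.
Qed.

End NormEquivalence.

Section PolynomialTupleSums.
Variable F : finFieldType.

Definition sumA m d (G : ('I_m -> {poly F}) -> C) : C :=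
  \sum_(c : {ffun 'I_m -> {ffun 'I_d -> F}} | c != 0) G (fun i => polyOf (c i)).

Lemma sumA_widen_le m d d' (G : ('I_m -> {poly F}) -> C) e :
  (d <= d')%N -> 0 <= e ->
  (forall (a : 'I_m -> {poly F}) i, (d < size (a i))%N -> nrm (G a) <= e) ->
  nrm (sumA d' G - sumA d G) <= e.
Proof.
move=> dd' e0 Ge; rewrite /sumA.
rewrite (bigID (fun c : {ffun 'I_m -> {ffun 'I_d' -> F}} =>
  [forall i, size (polyOf (c i)) <= d]%N)) /=.
pose ext (c : {ffun 'I_m -> {ffun 'I_d -> F}}) : {ffun 'I_m -> {ffun 'I_d' -> F}} :=
  [ffun i => coefs d' (polyOf (c i))].
pose res (c : {ffun 'I_m -> {ffun 'I_d' -> F}}) : {ffun 'I_m -> {ffun 'I_d -> F}} :=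
  [ffun i => coefs d (polyOf (c i))].
have polyOf_ext c i : polyOf (ext c i) = polyOf (c i).
  by rewrite ffunE coefsK // (leq_trans (size_polyOf _) dd').
have extK : cancel ext res.
  by move=> c; apply/ffunP => i; rewrite ffunE polyOf_ext polyOfK.
have ext0 : ext 0 = 0 by apply/ffunP => i; rewrite !ffunE polyOf0 coefs0.
have -> : \sum_(c : {ffun 'I_m -> {ffun 'I_d' -> F}} |
      (c != 0) && [forall i, size (polyOf (c i)) <= d]%N) G (fun i => polyOf (c i)) =
    \sum_(c : {ffun 'I_m -> {ffun 'I_d -> F}} | c != 0) G (fun i => polyOf (c i)).
  rewrite (reindex_onto ext res) => [|c /andP[_ /forallP cd]]; last first.
    by apply/ffunP => i; rewrite !ffunE coefsK ?cd // polyOfK.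
  apply: eq_big => [c|c _]; last by congr G; apply: funext => i; rewrite polyOf_ext.
  rewrite -{1}ext0 (can_eq extK) extK eqxx andbT andb_idr // => _.
  by apply/forallP => i; rewrite polyOf_ext size_polyOf.
rewrite addrAC subrr add0r.
apply: nrm_sum_le e0 _ => c /andP[_ /forallPn [i]]; rewrite -ltnNge; exact: Ge.
Qed.

Lemma sumA_lift0_le m d
    (G : ('I_m.+1 -> {poly F}) -> C) (G' : ('I_m -> {poly F}) -> C) e :
  0 <= e -> (forall a, a ord0 = 0 -> G a = G' (fun i => a (lift ord0 i))) ->
  (forall a, a ord0 != 0 -> nrm (G a) <= e) -> nrm (sumA d G - sumA d G') <= e.
Proof.
move=> e0 GG' Ge; rewrite /sumA.
rewrite (bigID (fun c : {ffun 'I_m.+1 -> {ffun 'I_d -> F}} => c ord0 == 0)) /=.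
pose ext (c : {ffun 'I_m -> {ffun 'I_d -> F}}) : {ffun 'I_m.+1 -> {ffun 'I_d -> F}} :=
  [ffun i => if unlift ord0 i is Some i' then c i' else 0].
pose res (c : {ffun 'I_m.+1 -> {ffun 'I_d -> F}}) : {ffun 'I_m -> {ffun 'I_d -> F}} :=
  [ffun i => c (lift ord0 i)].
have extK : cancel ext res by move=> c; apply/ffunP => i; rewrite !ffunE liftK.
have ext0 : ext 0 = 0.
  by apply/ffunP => i; rewrite !ffunE; case: unliftP => [i' _|_]; rewrite ?ffunE.
have ext_ord0 c : ext c ord0 = 0 by rewrite ffunE unlift_none.
have -> : \sum_(c : {ffun 'I_m.+1 -> {ffun 'I_d -> F}} | (c != 0) && (c ord0 == 0))
      G (fun i => polyOf (c i)) =
    \sum_(c : {ffun 'I_m -> {ffun 'I_d -> F}} | c != 0) G' (fun i => polyOf (c i)).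
  rewrite (reindex_onto ext res) => [|c /andP[_ /eqP c0]]; last first.
    by apply/ffunP => i; rewrite !ffunE; case: unliftP => [i' ->|->]; rewrite ?ffunE.
  apply: eq_big => [c|c _].
    by rewrite -{1}ext0 (can_eq extK) extK ext_ord0 !eqxx !andbT.
  rewrite GG' /= ?ext_ord0 ?polyOf0 //.
  by congr G'; apply: funext => i; rewrite ffunE liftK.
rewrite addrAC subrr add0r.
by apply: nrm_sum_le e0 _ => c /andP[_ c0]; apply: Ge; rewrite polyOf_eq0.
Qed.

Section Cinfty.
Variables (iota : {rmorphism F -> C}) (theta : C).
Hypothesis nrm_theta : nrm theta = #|F|%:R.
Hypothesis nrm_complete : forall u, cauchy_nrm nrm u -> exists v, cvg_nrm nrm u v.

Local Notation q := #|F|.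
Local Notation evalA := (evalA iota).
Local Notation Kinf := (in_Kinf iota nrm theta).

Lemma evalA0 x : evalA 0 x = 0. Proof. by rewrite /evalA rmorph0 horner0. Qed.
Lemma evalA1 x : evalA 1 x = 1. Proof. by rewrite /evalA rmorph1 hornerC. Qed.
Lemma evalAB a b x : evalA (a - b) x = evalA a x - evalA b x.
Proof. by rewrite /evalA rmorphB hornerD hornerN. Qed.
Lemma evalAN a x : evalA (- a) x = - evalA a x.
Proof. by rewrite /evalA rmorphN hornerN. Qed.
Lemma evalAM a b x : evalA (a * b) x = evalA a x * evalA b x.
Proof. by rewrite /evalA rmorphM hornerM. Qed.

Lemma nrm_iota c : c != 0 -> nrm (iota c) = 1.
Proof.
move=> c0; have q1 := finNzRing_gt1 F.
apply: (@nrm_unity_root _ q.-1); first by rewrite -subn1 subn_gt0.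
have cq : c ^+ q.-1 = 1.
  by apply: (mulfI c0); rewrite -exprS prednK ?expf_card ?mulr1 // ltnW.
by rewrite -rmorphXn cq rmorph1.
Qed.

Lemma nrm_iota_le1 c : nrm (iota c) <= 1.
Proof. by have [->|/nrm_iota ->] := eqVneq c 0; rewrite ?rmorph0 ?nrm0. Qed.

Lemma nrm_evalA_le1 a t : nrm t <= 1 -> nrm (evalA a t) <= 1.
Proof.
move=> t1; rewrite /evalA horner_coef; apply: nrm_sum_le => [|i _]; first exact: ler01.
rewrite coef_map nrmM nrmX; apply: mulr_ile1;
  by rewrite ?exprn_ge0 ?nrm_ge0 ?nrm_iota_le1 ?exprn_ile1 ?nrm_ge0.
Qed.

Lemma nrm_evalA_gt1 a x : 1 < nrm x -> a != 0 ->
  nrm (evalA a x) = nrm x ^+ (size a).-1.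
Proof.
move=> x1; elim/poly_ind: a => [|p c IH]; first by rewrite eqxx.
have eval_MXC : evalA (p * 'X + c%:P) x = evalA p x * x + iota c.
  by rewrite /evalA rmorphD rmorphM /= map_polyX map_polyC !hornerE.
rewrite eval_MXC size_MXaddC; have [->|p0 _] := eqVneq p 0.
  rewrite evalA0 !mul0r !add0r polyC_eq0 => c0.
  by rewrite /= (negPf c0) size_poly0 nrm_iota ?expr0.
have px : nrm (evalA p x * x) = nrm x ^+ size p.
  by rewrite nrmM IH // -exprSr prednK // size_poly_gt0.
rewrite /= nrmD_eq px //; apply: le_lt_trans (nrm_iota_le1 c) _.
by rewrite exprn_egt1 // size_poly_eq0.
Qed.

Lemma nrm_evalA_theta a : a != 0 -> nrm (evalA a theta) = q%:R ^+ (size a).-1.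
Proof. by move=> a0; rewrite nrm_evalA_gt1 // nrm_theta // ltr1n finNzRing_gt1. Qed.

Lemma evalA_theta_neq0 a : a != 0 -> evalA a theta != 0.
Proof.
move=> a0; apply/eqP => /(congr1 nrm); rewrite nrm_evalA_theta // nrm0.
by apply/eqP; rewrite expf_neq0 // pnatr_eq0 -lt0n (ltn_trans _ (finNzRing_gt1 F)).
Qed.

Definition ratA (y : C) : Prop :=
  exists a b : {poly F}, b != 0 /\ y = evalA a theta / evalA b theta.

Lemma ratA_evalA a : ratA (evalA a theta).
Proof. by exists a, 1; rewrite oner_neq0 evalA1 divr1. Qed.

Lemma ratA_sub x y : ratA x -> ratA y -> ratA (x - y).
Proof.
move=> [a [b [b0 ->]]] [a' [b' [b'0 ->]]].
exists (a * b' - a' * b), (b * b'); rewrite mulf_neq0 //; split=> //.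
rewrite evalAB !evalAM; field.
by rewrite !evalA_theta_neq0.
Qed.

Lemma ratA_mul x y : ratA x -> ratA y -> ratA (x * y).
Proof.
move=> [a [b [b0 ->]]] [a' [b' [b'0 ->]]].
exists (a * a'), (b * b'); rewrite mulf_neq0 //; split=> //.
rewrite !evalAM; field.
by rewrite !evalA_theta_neq0.
Qed.

Lemma ratA_inv x : ratA x -> ratA x^-1.
Proof.
move=> [a [b [b0 ->]]]; have [->|a0] := eqVneq a 0.
  by rewrite evalA0 mul0r invr0 -(evalA0 theta); exact: ratA_evalA.
by exists b, a; rewrite invf_div.
Qed.

Lemma in_KinfP x : Kinf x <-> nrm_closure ratA x.
Proof.
split=> Kx e /Kx.
  by move=> [a [b [b0 xab]]]; exists (evalA a theta / evalA b theta) => //; exists a, b.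
by move=> [_ [a [b [b0 ->]]] xab]; exists a, b.
Qed.

Lemma Kinf_evalA a : Kinf (evalA a theta).
Proof. exact/in_KinfP/nrm_closureW/ratA_evalA. Qed.

Lemma Kinf_sub x y : Kinf x -> Kinf y -> Kinf (x - y).
Proof.
by move=> /in_KinfP Kx /in_KinfP Ky; apply/in_KinfP/nrm_closure_sub; first exact: ratA_sub.
Qed.

Lemma Kinf_mul x y : Kinf x -> Kinf y -> Kinf (x * y).
Proof.
by move=> /in_KinfP Kx /in_KinfP Ky; apply/in_KinfP/nrm_closure_mul; first exact: ratA_mul.
Qed.

Lemma Kinf_inv x : Kinf x -> Kinf x^-1.
Proof. by move=> /in_KinfP Kx; apply/in_KinfP/nrm_closure_inv; first exact: ratA_inv. Qed.

Lemma Kinf_closed x : nrm_closure Kinf x -> Kinf x.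
Proof.
move=> Kx; apply/in_KinfP/nrm_closure_id => e /Kx [y /in_KinfP Ky xy].
by exists y.
Qed.

Lemma Kinf_indep_coef_bound m (z : 'I_m -> C) :
  K_indep Kinf z -> exists2 k, 0 < k & coef_bound Kinf z k.
Proof.
have Kinf1 : Kinf 1 by rewrite -(evalA1 theta); apply: Kinf_evalA.
exact: (K_indep_coef_bound Kinf1 Kinf_sub Kinf_mul Kinf_inv Kinf_closed nrm_complete).
Qed.

Definition eisen_term m (z : 'I_m -> C) (j : 'I_m) (k : nat) (t : C)
    (a : 'I_m -> {poly F}) : C :=
  evalA (a j) t / (\sum_i evalA (a i) theta * z i) ^+ (q ^ k).

Lemma psumE m (z : 'I_m -> C) j k t d :
  psum iota theta z j k t d = sumA d (eisen_term z j k t).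
Proof. by []. Qed.

Lemma nrm_eisen_term_le m (z : 'I_m -> C) j k t a X : nrm t <= 1 -> 1 <= X ->
  X <= nrm (\sum_i evalA (a i) theta * z i) -> nrm (eisen_term z j k t a) <= X^-1.
Proof.
move=> t1 X1 XS; rewrite /eisen_term nrmM nrmV nrmX.
set S := nrm (\sum_i _) in XS *.
have X0 : 0 < X := lt_le_trans ltr01 X1.
have XSn : X <= S ^+ (q ^ k).
  apply: le_trans XS (ler_eXnr _ (le_trans X1 XS)).
  by rewrite expn_gt0 (ltn_trans _ (finNzRing_gt1 F)).
apply: le_trans (_ : 1 * (S ^+ (q ^ k))^-1 <= X^-1).
  by apply: ler_wpM2r; [rewrite invr_ge0 exprn_ge0 ?nrm_ge0 | exact: nrm_evalA_le1].
by rewrite mul1r lef_pV2 ?posrE // (lt_le_trans X0).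
Qed.

Lemma psum_widen_le m (z : 'I_m -> C) j k t kappa d d' :
  coef_bound Kinf z kappa -> 0 < kappa -> nrm t <= 1 -> (d <= d')%N ->
  1 <= kappa * q%:R ^+ d ->
  nrm (psum iota theta z j k t d' - psum iota theta z j k t d)
    <= (kappa * q%:R ^+ d)^-1.
Proof.
move=> zk k0 t1 dd' X1; rewrite !psumE; apply: sumA_widen_le => // [|a i ai].
  by rewrite invr_ge0 (le_trans ler01 X1).
apply: nrm_eisen_term_le => //; apply: le_trans (zk _ (fun i => Kinf_evalA (a i)) i).
have a0 : a i != 0 by rewrite -size_poly_gt0 (leq_ltn_trans _ ai).
rewrite ler_pM2l // nrm_evalA_theta // ler_eXn2l ?ltr1n ?finNzRing_gt1 //.
by rewrite -ltnS prednK // size_poly_gt0.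
Qed.

Lemma psum_cauchy m (z : 'I_m -> C) j k t : K_indep Kinf z -> nrm t <= 1 ->
  cauchy_nrm nrm (psum iota theta z j k t).
Proof.
move=> zi t1 e e0; have [kappa k0 zk] := Kinf_indep_coef_bound zi.
have [N hN] := pow_unbounded (Num.max 1 e^-1) (finNzRing_gt1 F) k0.
exists N => p p' pN p'N.
wlog pp' : p p' pN p'N / (p <= p')%N.
  by move=> H; case: (leqP p p') => [|/ltnW] ?; [|rewrite nrmB]; apply: H.
have := hN p pN; rewrite gt_max => /andP[X1 Xe].
rewrite nrmB; apply: le_lt_trans (psum_widen_le j k zk k0 t1 pp' (ltW X1)) _.
by rewrite invf_plt ?posrE ?(lt_trans ltr01 X1).
Qed.

Lemma psum_cvg m (z : 'I_m -> C) j k t : K_indep Kinf z -> nrm t <= 1 ->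
  exists v, cvg_nrm nrm (psum iota theta z j k t) v.
Proof. by move=> zi t1; apply/nrm_complete/psum_cauchy. Qed.

Lemma inorm_le m z1 (zt : 'I_m -> C) b : (forall i, Kinf (b i)) ->
  inorm iota nrm theta z1 zt <= nrm (z1 - \sum_i b i * zt i).
Proof.
by move=> Kb; apply: ge_inf; [exists 0 => _ [c _ <-]; exact: nrm_ge0 | exists b].
Qed.

Lemma psum_zcons_le m (zt : 'I_m -> C) z1 j k t d :
  nrm t <= 1 -> 1 <= nrm z1 -> nrm z1 = inorm iota nrm theta z1 zt ->
  nrm (psum iota theta (zcons z1 zt) (lift ord0 j) k t d - psum iota theta zt j k t d)
    <= (nrm z1)^-1.
Proof.
move=> t1 z11 z1i; rewrite !psumE; apply: sumA_lift0_le => [|a a0|a a0].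
- by rewrite invr_ge0 (le_trans ler01 z11).
- rewrite /eisen_term big_ord_recl a0 evalA0 mul0r add0r.
  by congr (_ / _ ^+ _); apply: eq_bigr => i _; rewrite /zcons liftK.
apply: nrm_eisen_term_le => //; rewrite big_ord_recl.
set A0 := evalA (a ord0) theta; have A00 : A0 != 0 := evalA_theta_neq0 a0.
pose b i := evalA (- a (lift ord0 i)) theta / A0.
have Kb i : Kinf (b i).
  by apply/in_KinfP/nrm_closureW; exists (- a (lift ord0 i)), (a ord0).
have -> : A0 * zcons z1 zt ord0 +
    \sum_(i < m) evalA (a (lift ord0 i)) theta * zcons z1 zt (lift ord0 i) =
    A0 * (z1 - \sum_i b i * zt i).
  rewrite /zcons unlift_none mulrBr -mulrN -sumrN mulr_sumr; congr (_ + _).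
  apply: eq_bigr => i _.
  by rewrite liftK /b evalAN !mulNr opprK mulrA [A0 * _]mulrC divfK.
rewrite nrmM -[nrm z1]mul1r ler_pM ?ler01 ?nrm_ge0 // ?z1i ?inorm_le //.
by rewrite nrm_evalA_theta // exprn_ege1 // ler1n ltnW // finNzRing_gt1.
Qed.

End Cinfty.

End PolynomialTupleSums.

End UltrametricField.

Unset Implicit Arguments.

Theorem proposition3p9 (R : realType) (F : finFieldType) (C : closedFieldType)
  (iota : {rmorphism F -> C}) (nrm : C -> R) (theta : C)
  (HC : is_Cinfty iota nrm theta)
  (n : nat) (zt : 'I_n.+1 -> C) (hzt : in_Omega iota nrm theta zt)
  (j : 'I_n.+1) (k : nat) (t : C) (ht : nrm t <= 1) :
  exists L : C,
    cvg_nrm nrm (psum iota theta zt j k t) L /\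
    forall e : R, 0 < e -> exists M : R, forall z1 : C,
      in_Omega iota nrm theta (zcons z1 zt) ->
      nrm z1 = inorm iota nrm theta z1 zt ->
      M < nrm z1 ->
      exists v : C,
        cvg_nrm nrm (psum iota theta (zcons z1 zt) (lift ord0 j) k t) v /\
        nrm (v - L) < e.
Proof.
have nrm_abs := is_Cinfty_ultrametric HC.
have [_ [_ [_ [nrm_complete [nrm_theta _]]]]] := HC.
have [L hL] := psum_cvg nrm_abs nrm_theta nrm_complete j k hzt.1 ht.
exists L; split => // e e0.
exists (Num.max 1 e^-1) => z1 hz1 z1i; rewrite gt_max => /andP[z1_gt1 z1_gt_inve].
have [v hv] :=
  psum_cvg nrm_abs nrm_theta nrm_complete (lift ord0 j) k hz1.1 ht.
exists v; split => //.
have z1_ge1 := ltW z1_gt1.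
apply: le_lt_trans (cvg_nrm_dist_le nrm_abs hv hL
  (fun d => psum_zcons_le nrm_abs nrm_theta j k d ht z1_ge1 z1i)) _.
by rewrite invf_plt ?posrE // (lt_trans ltr01 z1_gt1).
Qed.
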